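(* Let $(A;R)\in\mathcal C$, let $t:R\to A$ be a transversal with image $A\setminus Y$, and work in the matroid $PG(A;R)$. For each closed set $F$ let $\beta(F)=|\{x\in F\setminus Y: \mathrm{cl}(t^{-1}(x))=F\}|$. Then $\beta(F)=\alpha(F)$ for every closed set $F$ of $PG(A;R)$.
   Context: A set system is a pair $(A;R)$ where $R$ is a set of finite non-empty subsets of $A$; for $X\subseteq A$, $R[X]=\{r\in R: r\subseteq X\}$ and $\delta(X)=|X|-|R[X]|$. $\mathcal C$ is the class of finite set systems with $\delta(X)\ge0$ for all $X\subseteq A$. For $(A;R)\in\mathcal C$ define $d(X)=\min\{\delta(Y):X\subseteq Y\subseteq A\}$ and $\mathrm{cl}(X)=\{y: d(X\cup\{y\})=d(X)\}$; $PG(A;R)$ is the matroid $(A,\mathrm{cl})$ with rank function $d$. A transversal is an injective $t:R\to A$ with $t(r)\in r$ for all $r$. A closed set is $F$ with $\mathrm{cl}(F)=F$. The $\alpha$-function of a matroid is defined on unions of closed sets $X$ recursively by $\alpha(X)=|X|-d(X)-\sum_G\alpha(G)$, the sum over closed $G\subsetneq X$. *)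

From HB Require Import structures.
From mathcomp Require Import all_boot all_order all_algebra.
Set Implicit Arguments. Unset Strict Implicit. Unset Printing Implicit Defensive.
Import Order.TTheory GRing.Theory Num.Theory.
Local Open Scope ring_scope.

Definition set_system (A : finType) (R : {set {set A}}) : Prop :=
  set0 \notin R.

Definition Rin (A : finType) (R : {set {set A}}) (X : {set A}) : {set {set A}} :=
  [set r in R | r \subset X].

Definition delta (A : finType) (R : {set {set A}}) (X : {set A}) : int :=
  (#|X|%:Z - #|Rin R X|%:Z).

Definition in_C (A : finType) (R : {set {set A}}) : Prop :=
  set_system R /\ forall X : {set A}, 0 <= delta R X.

(* d(X) = min { delta(Y) : X \subset Y } ; setT is always such a Y. *)
Definition dR (A : finType) (R : {set {set A}}) (X : {set A}) : int :=
  \big[Order.min/delta R setT]_(Y : {set A} | X \subset Y) delta R Y.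

Definition clR (A : finType) (R : {set {set A}}) (X : {set A}) : {set A} :=
  [set y | dR R (y |: X) == dR R X].

Definition closedR (A : finType) (R : {set {set A}}) (F : {set A}) : bool :=
  clR R F == F.

(* alpha-function of PG(A;R) on closed sets (recursion with fuel; fuel
   #|X|.+1 suffices since proper subsets have strictly smaller cardinality):
   alpha(X) = |X| - d(X) - sum_{G closed, G proper subset of X} alpha(G). *)
Fixpoint alpha_aux (A : finType) (R : {set {set A}}) (n : nat) (X : {set A}) : int :=
  match n with
  | 0 => 0
  | n'.+1 => #|X|%:Z - dR R X
             - \sum_(G : {set A} | closedR R G && (G \proper X)) alpha_aux R n' G
  end.

Definition alphaR (A : finType) (R : {set {set A}}) (X : {set A}) : int :=
  alpha_aux R #|X|.+1 X.

(* t : R -> A is a transversal (given as a function on all subsets, only its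
   restriction to R matters). *)
Definition transversalR (A : finType) (R : {set {set A}}) (t : {set A} -> A) : Prop :=
  {in R &, injective t} /\ (forall r, r \in R -> t r \in r).

(* beta(F) = |{ x in F \ Y : cl(t^{-1}(x)) = F }| ; for x not in Y, t^{-1}(x)
   is the unique r in R with t r = x. *)
Definition betaR (A : finType) (R : {set {set A}}) (t : {set A} -> A)
    (Y F : {set A}) : nat :=
  #|[set x in F :\: Y | [exists r in R, (t r == x) && (clR R r == F)]]|.

From HB Require Import structures.
From mathcomp Require Import all_boot all_order all_algebra.
From mathcomp Require Import zify.
Import Order.TTheory GRing.Theory Num.Theory.
Local Open Scope ring_scope.
Set Implicit Arguments. Unset Strict Implicit.

(* Proof strategy.
   1. delta is submodular, so among the supersets Z of X with delta Z = d(X)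
      ("tight" supersets) there is a largest one; it is exactly cl(X).  From
      this: X is contained in cl(X), cl(X) is closed, cl(X) lies in every
      closed set containing X, and delta(F) = d(F) for closed F.
   2. Both alpha and beta satisfy the same summation identity over closed
      sets:  sum_{G closed, G in F} phi(G) = |F| - d(F)  for closed F.
      For alpha this is its defining recursion.  For beta, beta(G) counts
      the r in R with cl(r) = G (t is injective with image A \ Y), so the
      sum counts the r in R[F], i.e. |R[F]| = |F| - delta(F) = |F| - d(F).
   3. A function on closed sets is determined by its sums over closed
      subsets (induction on cardinality), hence beta = alpha. *)

Lemma sums_over_subsets_inj (A : finType) (V : zmodType) (P : pred {set A})
    (f g : {set A} -> V) :
  (forall F, P F -> \sum_(G | P G && (G \subset F)) f G
                  = \sum_(G | P G && (G \subset F)) g G) ->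
  forall F, P F -> f F = g F.
Proof.
move=> sumsE F; have [n] := ubnP #|F|; elim: n F => // n IHn F ltFn PF.
have smallerE G : P G && (G \subset F) && (G != F) -> f G = g G.
  move=> /andP [/andP [PG GF] nGF]; apply: IHn PG.
  have GpF : G \proper F by rewrite properEneq nGF GF.
  by have := proper_card GpF; lia.
have := sumsE F PF; rewrite (bigD1 F) ?PF ?subxx //= [RHS](bigD1 F) ?PF ?subxx //=.
by rewrite (eq_bigr g smallerE) => /addIr.
Qed.

Section Closure.
Variables (A : finType) (R : {set {set A}}).

Lemma dR_le (X Z : {set A}) : X \subset Z -> dR R X <= delta R Z.
Proof. by move=> XZ; rewrite /dR (bigD1 Z) //= ge_min lexx. Qed.

Lemma dR_attained (X : {set A}) :
  exists2 Z : {set A}, X \subset Z & dR R X = delta R Z.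
Proof.
rewrite /dR; apply: (big_ind (fun v => exists2 Z : {set A}, X \subset Z & v = delta R Z)).
- by exists setT; rewrite ?subsetT.
- by move=> a b [Za XZa ->] [Zb XZb ->]; rewrite minElt; case: ifP => _; [exists Za | exists Zb].
- by move=> Z XZ; exists Z.
Qed.

Lemma dR_mono (X X' : {set A}) : X \subset X' -> dR R X <= dR R X'.
Proof. by move=> XX'; have [Z X'Z ->] := dR_attained X'; apply/dR_le/(subset_trans XX'). Qed.

(* Submodularity of delta: |.| is modular and R[.] is supermodular. *)
Lemma delta_submod (Y Z : {set A}) :
  delta R (Y :|: Z) + delta R (Y :&: Z) <= delta R Y + delta R Z.
Proof.
have RinI : Rin R (Y :&: Z) = Rin R Y :&: Rin R Z.
  by apply/setP => r; rewrite !inE subsetI; case: (r \in R).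
have RinU : Rin R Y :|: Rin R Z \subset Rin R (Y :|: Z).
  apply/subsetP => r; rewrite !inE => /orP [] /andP [-> rS] /=.
    exact: subset_trans rS (subsetUl _ _).
  exact: subset_trans rS (subsetUr _ _).
have := cardsUI Y Z; have := cardsUI (Rin R Y) (Rin R Z).
have := subset_leq_card RinU; rewrite /delta RinI; lia.
Qed.

Lemma tightU (X Z1 Z2 : {set A}) : X \subset Z1 -> X \subset Z2 ->
  delta R Z1 = dR R X -> delta R Z2 = dR R X -> delta R (Z1 :|: Z2) = dR R X.
Proof.
move=> XZ1 XZ2 E1 E2; have := delta_submod Z1 Z2.
have := dR_le (subset_trans XZ1 (subsetUl Z1 Z2)).
have : X \subset Z1 :&: Z2 by rewrite subsetI XZ1 XZ2.
move=> /dR_le; rewrite E1 E2; lia.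
Qed.

Lemma clR_spec (X : {set A}) :
  [/\ X \subset clR R X, delta R (clR R X) = dR R X &
      forall Z : {set A}, X \subset Z -> delta R Z = dR R X -> Z \subset clR R X].
Proof.
have [Z0 XZ0 EZ0] := dR_attained X.
pose tight (Z : {set A}) := (X \subset Z) && (delta R Z == dR R X).
have tightZ0 : tight Z0 by rewrite /tight XZ0 EZ0 eqxx.
case: (@arg_maxnP _ Z0 tight (fun Z => #|Z|) tightZ0) => M /andP [XM /eqP EM] Mmax.
have Mlargest (Z : {set A}) : X \subset Z -> delta R Z = dR R X -> Z \subset M.
  move=> XZ EZ; have tightZM : tight (Z :|: M).
    by rewrite /tight (subset_trans XZ (subsetUl _ _)) (tightU XZ XM EZ EM) eqxx.
  have : M == Z :|: M by rewrite eqEcard subsetUr; apply: Mmax.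
  by move/eqP => ->; apply: subsetUl.
suff -> : clR R X = M by [].
apply/setP => y; rewrite inE; apply/eqP/idP => [Ey | yM].
- have [Z yXZ EZ] := dR_attained (y |: X).
  have XZ : X \subset Z by apply: subset_trans yXZ; apply: subsetUr.
  apply: (subsetP (Mlargest Z XZ _)); first by rewrite -EZ Ey.
  by apply: (subsetP yXZ); rewrite setU11.
- apply/eqP; rewrite eq_le [X in _ && X]dR_mono ?subsetUr // andbT -EM.
  by apply: dR_le; rewrite subUset sub1set yM XM.
Qed.

Lemma sub_clR (X : {set A}) : X \subset clR R X.
Proof. by case: (clR_spec X). Qed.

Lemma closed_delta (F : {set A}) : closedR R F -> delta R F = dR R F.
Proof. by move=> /eqP clF; case: (clR_spec F); rewrite clF. Qed.

Lemma clR_min (X F : {set A}) : closedR R F -> X \subset F -> clR R X \subset F.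
Proof.
move=> /eqP clF XF; case: (clR_spec X) => XM EM _.
case: (clR_spec F); rewrite clF => _ EF Flargest.
have FMtight : delta R (F :|: clR R X) = dR R F.
  have := delta_submod F (clR R X); have := dR_le (subsetUl F (clR R X)).
  have : X \subset F :&: clR R X by rewrite subsetI XF XM.
  move=> /dR_le; rewrite EF EM; lia.
by have := Flargest _ (subsetUl _ _) FMtight; rewrite subUset => /andP [].
Qed.

(* cl is idempotent: cl(X) is tight for X, hence cl(cl X) is tight for X too. *)
Lemma clR_closed (X : {set A}) : closedR R (clR R X).
Proof.
case: (clR_spec X) => XM EM Mlargest; case: (clR_spec (clR R X)) => MM' EM' _.
have dM : dR R (clR R X) = dR R X.
  by apply/eqP; rewrite eq_le [X in _ && X]dR_mono // andbT -EM dR_le.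
apply/eqP/eqP; rewrite eqEsubset MM' andbT Mlargest ?EM' //.
exact: subset_trans XM MM'.
Qed.

Lemma alpha_fuel n m (X : {set A}) : (#|X| < n)%N -> (#|X| < m)%N ->
  alpha_aux R n X = alpha_aux R m X.
Proof.
elim: n m X => [|n IH] [|m] X //= ltXn ltXm.
congr (_ - _); apply: eq_bigr => G /andP [_ GX].
by apply: IH; have := proper_card GX; lia.
Qed.

Lemma alpha_sum (F : {set A}) : closedR R F ->
  \sum_(G | closedR R G && (G \subset F)) alphaR R G = #|F|%:Z - dR R F.
Proof.
move=> clF; rewrite (bigD1 F) ?clF ?subxx //= {1}/alphaR /=.
have -> : \sum_(G | closedR R G && (G \subset F) && (G != F)) alphaR R G
        = \sum_(G | closedR R G && (G \proper F)) alpha_aux R #|F| G.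
  apply: eq_big => [G|G /andP [/andP [_ GF] nGF]].
    by rewrite properEneq andbA; case: (closedR R G); rewrite //= andbC.
  have GpF : G \proper F by rewrite properEneq nGF GF.
  by apply: alpha_fuel => //; have := proper_card GpF; lia.
by rewrite subrK.
Qed.

End Closure.

Section Transversal.
Variables (A : finType) (R : {set {set A}}) (t : {set A} -> A) (Y : {set A}).
Hypothesis t_inj : {in R &, injective t}.
Hypothesis t_mem : forall r, r \in R -> t r \in r.
Hypothesis t_img : [set t r | r in R] = ~: Y.

Lemma betaR_card (G : {set A}) :
  betaR R t Y G = #|[set r in R | clR R r == G]|.
Proof.
rewrite /betaR -(card_in_imset (f := t)); last first.
  by move=> r1 r2; rewrite !inE => /andP [r1R _] /andP [r2R _]; apply: t_inj.
apply: eq_card => x; rewrite !inE; apply/andP/imsetP.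
- case=> _ /existsP [r /andP [rR /andP [/eqP <- /eqP clr]]].
  by exists r => //; rewrite inE rR clr eqxx.
- case=> r; rewrite inE => /andP [rR /eqP clr] ->.
  have : t r \in ~: Y by rewrite -t_img imset_f.
  rewrite inE -clr (subsetP (sub_clR R r)) ?t_mem // => ->; split=> //.
  by apply/existsP; exists r; rewrite rR !eqxx.
Qed.

(* Grouping R[F] by closures: the beta-values of closed G in F add up to |R[F]|. *)
Lemma beta_sum_nat (F : {set A}) : closedR R F ->
  (\sum_(G | closedR R G && (G \subset F)) betaR R t Y G)%N = #|Rin R F|.
Proof.
move=> clF; rewrite /Rin -sum1dep_card.
rewrite [RHS](partition_big (clR R) (fun G => closedR R G && (G \subset F))); last first.
  by move=> r /andP [_ rF]; rewrite clR_closed clR_min.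
apply: eq_bigr => G /andP [_ GF]; rewrite betaR_card -sum1dep_card.
apply: eq_bigl => r; case: (r \in R) => //=.
case: eqP => [clr|_]; rewrite ?andbF // andbT -clr in GF *.
exact/esym/(subset_trans (sub_clR R r) GF).
Qed.

Lemma beta_sum (F : {set A}) : closedR R F ->
  \sum_(G | closedR R G && (G \subset F)) (betaR R t Y G)%:Z = #|F|%:Z - dR R F.
Proof.
move=> clF; rewrite -(closed_delta clF) /delta -beta_sum_nat //.
by rewrite -(big_morph Posz PoszD (erefl _)) opprB addrC subrK.
Qed.

End Transversal.

Theorem mainTheorem5 (A : finType) (R : {set {set A}}) (t : {set A} -> A)
    (Y : {set A}) :
  in_C R ->
  transversalR R t ->
  [set t r | r in R] = ~: Y ->
  forall F : {set A}, closedR R F -> (betaR R t Y F)%:Z = alphaR R F.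
Proof.
move=> _ [t_inj t_mem] t_img; apply: sums_over_subsets_inj => F clF.
by rewrite (beta_sum t_inj t_mem t_img clF) alpha_sum.
Qed.
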